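(* Let $u,v:\mathbb R\to\mathbb R^2$ be smooth $2\pi$-periodic maps with $[u(t),v(t)]=1$ and $u(t+2\pi/3)=v(t)$, $v(t+2\pi/3)=-u(t)-v(t)$ for all $t$. Let $c:\mathbb R\to\mathbb R^2$ be a $C^1$ curve such that the triangle $w_1(t)=u(t)+c(t)$, $w_2(t)=v(t)+c(t)$, $w_3(t)=-u(t)-v(t)+c(t)$ is horizontal, i.e. $[w_2-w_1,w_3']=[w_3-w_2,w_1']=[w_1-w_3,w_2']=0$ for all $t$. Set $p=[u,u']$, $q=[v,v']$, $r=[u',v]=[v',u]$. Then $$c'(t)=\tfrac13\big(p(t)-2q(t)+2r(t)\big)v(t)-\tfrac13\big(q(t)-2p(t)+2r(t)\big)u(t).$$ Furthermore, the monodromy condition $(w_1,w_2,w_3)(t+2\pi/3)=(w_2,w_3,w_1)(t)$ for all $t$ holds if and only if $$\int_0^{2\pi}\big(p-2q+2r\big)v-\big(q-2p+2r\big)u\,dt=0,$$ or, equivalently, if and only if $\int_0^{2\pi}[u'(t),v(t)]\,(v(t)-u(t))\,dt=0$.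
   Context: $[\cdot,\cdot]$ is the determinant of two plane vectors; primes denote derivatives in $t$. The triangle $(w_1,w_2,w_3)$ has centroid $c$ and oriented area $3/2$. *)

From Stdlib Require Import Reals.
From Coquelicot Require Import Coquelicot.
Open Scope R_scope.

Definition det2 (a1 a2 b1 b2 : R) : R := a1 * b2 - a2 * b1.

Definition smooth (f : R -> R) : Prop := forall (n : nat) (t : R), ex_derive_n f n t.

Definition is_C1 (f : R -> R) : Prop :=
  (forall t, ex_derive f t) /\ (forall t, continuous (Derive f) t).

(* Differentiating [u, v] = 1 gives [u', v] = [v', u]. In the unimodular frame (u, v) the
   horizontality conditions are two linear equations for [u, c'] and [v, c'], which determine
   c'. The shift by T = 2 PI / 3 maps (u, v) to (v, -u-v); under it p, q, r transform linearly
   and the drift 3 c' is T-periodic. Since u + c, v + c, -u-v + c are cyclically permuted by the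
   shift, monodromy means that c is T-periodic, i.e. that c' integrates to zero over [0, T], or
   equivalently over [0, 3 T] = [0, 2 PI]. Finally the drift differs from 3 r (v - u) by a
   coboundary Y - Y (. + T) of a 2 PI-periodic Y, so both have the same integral. *)

From Stdlib Require Import Reals Lra.
From Coquelicot Require Import Coquelicot.
Open Scope R_scope.

Definition continuous_everywhere (f : R -> R) : Prop := forall x, continuous f x.

Lemma continuous_everywhere_const (k : R) : continuous_everywhere (fun _ => k).
Proof. intros x; apply continuous_const. Qed.

Lemma continuous_everywhere_plus (f g : R -> R) :
  continuous_everywhere f -> continuous_everywhere g ->
  continuous_everywhere (fun x => f x + g x).
Proof. intros Hf Hg x; exact (continuous_plus f g x (Hf x) (Hg x)). Qed.

Lemma continuous_everywhere_minus (f g : R -> R) :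
  continuous_everywhere f -> continuous_everywhere g ->
  continuous_everywhere (fun x => f x - g x).
Proof. intros Hf Hg x; exact (continuous_minus f g x (Hf x) (Hg x)). Qed.

Lemma continuous_everywhere_mult (f g : R -> R) :
  continuous_everywhere f -> continuous_everywhere g ->
  continuous_everywhere (fun x => f x * g x).
Proof. intros Hf Hg x; exact (continuous_mult f g x (Hf x) (Hg x)). Qed.

Lemma continuous_everywhere_shift (f : R -> R) (a : R) :
  continuous_everywhere f -> continuous_everywhere (fun x => f (x + a)).
Proof.
  intros Hf x. apply (continuous_comp (fun y => y + a) f); [| apply Hf].
  apply (continuous_plus (fun y => y) (fun _ => a)); [apply continuous_id | apply continuous_const].
Qed.

Ltac solve_continuous_everywhere :=
  repeat match goal with
  | |- continuous_everywhere (fun _ => _ + _) => apply continuous_everywhere_plus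
  | |- continuous_everywhere (fun _ => _ - _) => apply continuous_everywhere_minus
  | |- continuous_everywhere (fun _ => _ * _) => apply continuous_everywhere_mult
  | |- continuous_everywhere (fun x => ?f (x + ?a)) => apply continuous_everywhere_shift
  | |- continuous_everywhere (fun _ => ?k) => apply continuous_everywhere_const
  | |- continuous_everywhere _ => assumption
  end.

Lemma smooth_ex_derive (f : R -> R) : smooth f -> forall x, ex_derive f x.
Proof. intros Hf x; exact (Hf 1%nat x). Qed.

Lemma smooth_continuous (f : R -> R) : smooth f -> continuous_everywhere f.
Proof.
  intros Hf x.
  apply (ex_derive_continuous (K := R_AbsRing) (V := R_NormedModule)), smooth_ex_derive, Hf.
Qed.

Lemma smooth_Derive_continuous (f : R -> R) : smooth f -> continuous_everywhere (Derive f).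
Proof.
  intros Hf x.
  apply (ex_derive_continuous (K := R_AbsRing) (V := R_NormedModule)); exact (Hf 2%nat x).
Qed.

Lemma ex_RInt_continuous_everywhere (f : R -> R) (a b : R) :
  continuous_everywhere f -> ex_RInt f a b.
Proof.
  intros Hf; apply (ex_RInt_continuous (V := R_CompleteNormedModule)); intros x _; apply Hf.
Qed.

Lemma RInt_translate (f : R -> R) (a b c : R) : continuous_everywhere f ->
  RInt (fun x => f (x + c)) a b = RInt f (a + c) (b + c).
Proof.
  intros Hf.
  rewrite (RInt_ext _ (fun x => scal 1 (f (1 * x + c)))).
  - rewrite (RInt_comp_lin (V := R_CompleteNormedModule)), !Rmult_1_l; [reflexivity |].
    apply ex_RInt_continuous_everywhere, Hf.
  - intros x _; rewrite !Rmult_1_l; reflexivity.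
Qed.

Lemma RInt_period_window (f : R -> R) (P a : R) :
  continuous_everywhere f -> (forall x, f (x + P) = f x) ->
  RInt f a (a + P) = RInt f 0 P.
Proof.
  intros Hf Hper.
  assert (Hex : forall b c, ex_RInt f b c) by (intros; apply ex_RInt_continuous_everywhere, Hf).
  assert (tail : RInt f P (a + P) = RInt f 0 a).
  { rewrite <- (Rplus_0_l P) at 1; rewrite <- RInt_translate by exact Hf.
    apply RInt_ext; intros x _; apply Hper. }
  rewrite <- (RInt_Chasles f a P (a + P)), tail by apply Hex.
  rewrite <- (RInt_Chasles f 0 a P) by apply Hex.
  apply Rplus_comm.
Qed.

Lemma RInt_periods (f : R -> R) (P : R) (n : nat) :
  continuous_everywhere f -> (forall x, f (x + P) = f x) ->
  RInt f 0 (INR n * P) = INR n * RInt f 0 P.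
Proof.
  intros Hf Hper. induction n as [| n IH].
  - rewrite !Rmult_0_l; apply (RInt_point (V := R_CompleteNormedModule)).
  - rewrite S_INR, Rmult_plus_distr_r, Rmult_1_l, Rmult_plus_distr_r, Rmult_1_l.
    rewrite <- (RInt_Chasles f 0 (INR n * P)) by apply ex_RInt_continuous_everywhere, Hf.
    rewrite IH, RInt_period_window by assumption.
    reflexivity.
Qed.

Lemma RInt_coboundary (f : R -> R) (P a : R) :
  continuous_everywhere f -> (forall x, f (x + P) = f x) ->
  RInt (fun x => f x - f (x + a)) 0 P = 0.
Proof.
  intros Hf Hper.
  rewrite (RInt_minus f (fun x => f (x + a)));
    [| apply ex_RInt_continuous_everywhere; solve_continuous_everywhere ..].
  rewrite RInt_translate, Rplus_0_l, (Rplus_comm P), RInt_period_window by assumption.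
  apply Rminus_diag_eq; reflexivity.
Qed.

Lemma Derive_translate_eq (f g : R -> R) (T t : R) :
  (forall x, ex_derive f x) -> (forall s, f (s + T) = g s) ->
  Derive f (t + T) = Derive g t.
Proof.
  intros Hf Hfg. rewrite <- (Derive_ext _ _ t Hfg).
  symmetry; apply is_derive_unique. auto_derive; [apply Hf | apply Rmult_1_l].
Qed.

Lemma Derive_det2 (f1 f2 g1 g2 : R -> R) (t : R) :
  ex_derive f1 t -> ex_derive f2 t -> ex_derive g1 t -> ex_derive g2 t ->
  Derive (fun s => det2 (f1 s) (f2 s) (g1 s) (g2 s)) t =
  det2 (Derive f1 t) (Derive f2 t) (g1 t) (g2 t) + det2 (f1 t) (f2 t) (Derive g1 t) (Derive g2 t).
Proof.
  intros. unfold det2.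
  rewrite Derive_minus, !Derive_mult by (auto_derive; tauto).
  ring.
Qed.

Lemma periodic_iff_RInt_Derive (C : R -> R) (T : R) :
  (forall x, ex_derive C x) -> continuous_everywhere (Derive C) ->
  (forall x, Derive C (x + T) = Derive C x) ->
  (forall t, C (t + T) = C t) <-> RInt (Derive C) 0 T = 0.
Proof.
  intros HC HdC Hper.
  assert (increment : forall t, C (t + T) - C t = RInt (Derive C) 0 T).
  { intros t. rewrite <- (RInt_period_window _ T t), RInt_Derive by auto. reflexivity. }
  split.
  - intros H. rewrite <- (increment 0), H. apply Rminus_diag_eq; reflexivity.
  - intros H t. specialize (increment t). lra.
Qed.

Definition drift (U V p q r : R -> R) (t : R) : R :=
  (p t - 2 * q t + 2 * r t) * V t - (q t - 2 * p t + 2 * r t) * U t.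

Section Drift.

Variables (p q r : R -> R) (T : R).

Hypotheses (p_shift : forall t, p (t + T) = q t)
  (q_shift : forall t, q (t + T) = p t + q t - 2 * r t)
  (r_shift : forall t, r (t + T) = q t - r t).

Hypotheses (p_cont : continuous_everywhere p) (r_cont : continuous_everywhere r).

Variables (U V C : R -> R).

Hypotheses (U_shift : forall t, U (t + T) = V t) (V_shift : forall t, V (t + T) = - U t - V t).

Hypotheses (U_cont : continuous_everywhere U) (V_cont : continuous_everywhere V).

Lemma drift_periodic (t : R) : drift U V p q r (t + T) = drift U V p q r t.
Proof. unfold drift; rewrite U_shift, V_shift, p_shift, q_shift, r_shift; ring. Qed.

Lemma RInt_drift :
  RInt (drift U V p q r) 0 (3 * T) = 3 * RInt (fun t => r t * (V t - U t)) 0 (3 * T).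
Proof.
  (* [drift - 3 r (V - U)] is the coboundary [Y - Y (. + T)] of a [3 T]-periodic [Y]. *)
  set (Y := fun t => 2 * p t * U t + p t * V t - r t * U t - 2 * r t * V t).
  assert (Y_cont : continuous_everywhere Y) by (unfold Y; solve_continuous_everywhere).
  assert (Y_periodic : forall t, Y (t + 3 * T) = Y t).
  { intros t. unfold Y. replace (t + 3 * T) with (t + T + T + T) by ring.
    do 3 rewrite ?U_shift, ?V_shift, ?p_shift, ?q_shift, ?r_shift.
    ring. }
  assert (decomposition :
    forall t, drift U V p q r t = (Y t - Y (t + T)) + 3 * (r t * (V t - U t))).
  { intros t. unfold drift, Y. rewrite U_shift, V_shift, p_shift, r_shift. ring. }
  rewrite (RInt_ext _ _ 0 (3 * T) (fun t _ => decomposition t)).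
  rewrite (RInt_plus (fun t => Y t - Y (t + T)) (fun t => 3 * (r t * (V t - U t)))),
    (RInt_scal (fun t => r t * (V t - U t))), RInt_coboundary by
    first [assumption | apply ex_RInt_continuous_everywhere; solve_continuous_everywhere].
  apply Rplus_0_l.
Qed.

Hypotheses (C_C1 : is_C1 C)
  (C_velocity : forall t, Derive C t = 1 / 3 * (p t - 2 * q t + 2 * r t) * V t
                                     - 1 / 3 * (q t - 2 * p t + 2 * r t) * U t).

Lemma periodic_iff_RInt_drift :
  (forall t, C (t + T) = C t) <-> RInt (drift U V p q r) 0 (3 * T) = 0.
Proof.
  destruct C_C1 as [C_derivable DC_cont].
  assert (drift_velocity : forall t, drift U V p q r t = 3 * Derive C t)
    by (intros t; rewrite C_velocity; unfold drift; field).
  assert (DC_periodic : forall t, Derive C (t + T) = Derive C t).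
  { intros t. generalize (drift_periodic t). rewrite !drift_velocity. lra. }
  assert (RInt_velocity :
    RInt (drift U V p q r) 0 (3 * T) = 9 * RInt (Derive C) 0 T).
  { rewrite (RInt_ext _ _ 0 (3 * T) (fun t _ => drift_velocity t)).
    rewrite (RInt_scal (Derive C)) by (apply ex_RInt_continuous_everywhere; exact DC_cont).
    replace (3 * T) with (INR 3 * T) by (simpl; ring).
    rewrite RInt_periods by assumption.
    change (3 * (INR 3 * RInt (Derive C) 0 T) = 9 * RInt (Derive C) 0 T).
    simpl; ring. }
  rewrite periodic_iff_RInt_Derive, RInt_velocity by assumption.
  lra.
Qed.

Lemma periodic_iff_RInt_mixed :
  (forall t, C (t + T) = C t) <-> RInt (fun t => r t * (V t - U t)) 0 (3 * T) = 0.
Proof. rewrite periodic_iff_RInt_drift, RInt_drift. lra. Qed.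

End Drift.

Definition wronskian (f g : R -> R) (t : R) : R := det2 (f t) (g t) (Derive f t) (Derive g t).

Definition mixed_wronskian (f1 f2 g1 g2 : R -> R) (t : R) : R :=
  det2 (Derive f1 t) (Derive f2 t) (g1 t) (g2 t).

Lemma continuous_wronskian (f g : R -> R) :
  smooth f -> smooth g -> continuous_everywhere (wronskian f g).
Proof.
  intros Hf Hg. pose proof (smooth_continuous f Hf). pose proof (smooth_continuous g Hg).
  pose proof (smooth_Derive_continuous f Hf). pose proof (smooth_Derive_continuous g Hg).
  unfold wronskian, det2; solve_continuous_everywhere.
Qed.

Lemma continuous_mixed_wronskian (f1 f2 g1 g2 : R -> R) :
  smooth f1 -> smooth f2 -> smooth g1 -> smooth g2 ->
  continuous_everywhere (mixed_wronskian f1 f2 g1 g2).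
Proof.
  intros Hf1 Hf2 Hg1 Hg2.
  pose proof (smooth_Derive_continuous f1 Hf1). pose proof (smooth_Derive_continuous f2 Hf2).
  pose proof (smooth_continuous g1 Hg1). pose proof (smooth_continuous g2 Hg2).
  unfold mixed_wronskian, det2; solve_continuous_everywhere.
Qed.

Section Frame.

Variables (u1 u2 v1 v2 : R -> R) (T : R).

Hypotheses (u1_smooth : smooth u1) (u2_smooth : smooth u2)
  (v1_smooth : smooth v1) (v2_smooth : smooth v2).

Hypothesis frame_unimodular : forall t, det2 (u1 t) (u2 t) (v1 t) (v2 t) = 1.

Hypotheses (u_shift : forall t, u1 (t + T) = v1 t /\ u2 (t + T) = v2 t)
  (v_shift : forall t, v1 (t + T) = - u1 t - v1 t /\ v2 (t + T) = - u2 t - v2 t).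

Lemma Derive_frame_det (t : R) :
  det2 (Derive u1 t) (Derive u2 t) (v1 t) (v2 t) +
  det2 (u1 t) (u2 t) (Derive v1 t) (Derive v2 t) = 0.
Proof.
  rewrite <- Derive_det2 by (apply smooth_ex_derive; assumption).
  rewrite (Derive_ext _ (fun _ => 1)) by apply frame_unimodular.
  apply Derive_const.
Qed.

Lemma mixed_wronskian_swap (t : R) :
  mixed_wronskian u1 u2 v1 v2 t = det2 (Derive v1 t) (Derive v2 t) (u1 t) (u2 t).
Proof. generalize (Derive_frame_det t); unfold mixed_wronskian, det2; lra. Qed.

Lemma Derive_u_shift (t : R) :
  Derive u1 (t + T) = Derive v1 t /\ Derive u2 (t + T) = Derive v2 t.
Proof.
  split; apply Derive_translate_eq; try apply smooth_ex_derive; try assumption;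
    intros s; apply u_shift.
Qed.

Lemma Derive_v_shift (t : R) :
  Derive v1 (t + T) = - Derive u1 t - Derive v1 t /\
  Derive v2 (t + T) = - Derive u2 t - Derive v2 t.
Proof.
  split.
  - rewrite (Derive_translate_eq v1 (fun s => - u1 s - v1 s))
      by (try apply smooth_ex_derive; try assumption; intros s; apply v_shift).
    rewrite Derive_minus, Derive_opp by (auto_derive; apply smooth_ex_derive; assumption).
    reflexivity.
  - rewrite (Derive_translate_eq v2 (fun s => - u2 s - v2 s))
      by (try apply smooth_ex_derive; try assumption; intros s; apply v_shift).
    rewrite Derive_minus, Derive_opp by (auto_derive; apply smooth_ex_derive; assumption).
    reflexivity.
Qed.

Lemma wronskian_u_shift (t : R) : wronskian u1 u2 (t + T) = wronskian v1 v2 t.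
Proof.
  unfold wronskian. destruct (u_shift t) as [-> ->], (Derive_u_shift t) as [-> ->].
  reflexivity.
Qed.

Lemma wronskian_v_shift (t : R) :
  wronskian v1 v2 (t + T) =
  wronskian u1 u2 t + wronskian v1 v2 t - 2 * mixed_wronskian u1 u2 v1 v2 t.
Proof.
  generalize (Derive_frame_det t). unfold wronskian, mixed_wronskian, det2.
  destruct (v_shift t) as [-> ->], (Derive_v_shift t) as [-> ->].
  lra.
Qed.

Lemma mixed_wronskian_shift (t : R) :
  mixed_wronskian u1 u2 v1 v2 (t + T) = wronskian v1 v2 t - mixed_wronskian u1 u2 v1 v2 t.
Proof.
  generalize (Derive_frame_det t). unfold wronskian, mixed_wronskian, det2.
  destruct (v_shift t) as [-> ->], (Derive_u_shift t) as [-> ->].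
  lra.
Qed.

End Frame.

Lemma det2_decompose (x1 x2 u1 u2 v1 v2 : R) :
  det2 u1 u2 v1 v2 = 1 ->
  x1 = det2 u1 u2 x1 x2 * v1 - det2 v1 v2 x1 x2 * u1 /\
  x2 = det2 u1 u2 x1 x2 * v2 - det2 v1 v2 x1 x2 * u2.
Proof.
  intros Hdet. split.
  - transitivity (x1 * det2 u1 u2 v1 v2); [rewrite Hdet; ring | unfold det2; ring].
  - transitivity (x2 * det2 u1 u2 v1 v2); [rewrite Hdet; ring | unfold det2; ring].
Qed.

Lemma horizontal_velocity (u1 u2 v1 v2 du1 du2 dv1 dv2 d1 d2 : R) :
  det2 u1 u2 v1 v2 = 1 ->
  det2 du1 du2 v1 v2 + det2 u1 u2 dv1 dv2 = 0 ->
  det2 (- u1 - 2 * v1) (- u2 - 2 * v2) (du1 + d1) (du2 + d2) = 0 ->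
  det2 (2 * u1 + v1) (2 * u2 + v2) (dv1 + d1) (dv2 + d2) = 0 ->
  let p := det2 u1 u2 du1 du2 in
  let q := det2 v1 v2 dv1 dv2 in
  let r := det2 du1 du2 v1 v2 in
  d1 = 1 / 3 * (p - 2 * q + 2 * r) * v1 - 1 / 3 * (q - 2 * p + 2 * r) * u1 /\
  d2 = 1 / 3 * (p - 2 * q + 2 * r) * v2 - 1 / 3 * (q - 2 * p + 2 * r) * u2.
Proof.
  intros Hdet Hdet' H1 H2 p q r.
  assert (Hu : det2 u1 u2 d1 d2 = (p - 2 * q + 2 * r) / 3)
    by (unfold p, q, r, det2 in *; lra).
  assert (Hv : det2 v1 v2 d1 d2 = (q - 2 * p + 2 * r) / 3)
    by (unfold p, q, r, det2 in *; lra).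
  destruct (det2_decompose d1 d2 u1 u2 v1 v2 Hdet) as [E1 E2].
  rewrite Hu, Hv in E1, E2.
  split; [rewrite E1 | rewrite E2]; field.
Qed.

Lemma monodromy_iff_periodic (u1 u2 v1 v2 c1 c2 : R -> R) (T : R) :
  (forall t, u1 (t + T) = v1 t /\ u2 (t + T) = v2 t) ->
  (forall t, v1 (t + T) = - u1 t - v1 t /\ v2 (t + T) = - u2 t - v2 t) ->
  (forall t,
     (u1 (t + T) + c1 (t + T) = v1 t + c1 t /\ u2 (t + T) + c2 (t + T) = v2 t + c2 t) /\
     (v1 (t + T) + c1 (t + T) = - u1 t - v1 t + c1 t /\
      v2 (t + T) + c2 (t + T) = - u2 t - v2 t + c2 t) /\
     (- u1 (t + T) - v1 (t + T) + c1 (t + T) = u1 t + c1 t /\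
      - u2 (t + T) - v2 (t + T) + c2 (t + T) = u2 t + c2 t))
  <-> (forall t, c1 (t + T) = c1 t) /\ (forall t, c2 (t + T) = c2 t).
Proof.
  intros u_shift v_shift. split.
  - intros H. split; intros t; destruct (H t) as [[E1 E2] _], (u_shift t); lra.
  - intros [H1 H2] t. destruct (u_shift t), (v_shift t).
    rewrite H1, H2. repeat split; lra.
Qed.
Theorem proposition4p3 (u1 u2 v1 v2 c1 c2 : R -> R) :
  smooth u1 -> smooth u2 -> smooth v1 -> smooth v2 ->
  (forall t, u1 (t + 2 * PI) = u1 t /\ u2 (t + 2 * PI) = u2 t) ->
  (forall t, v1 (t + 2 * PI) = v1 t /\ v2 (t + 2 * PI) = v2 t) ->
  (forall t, det2 (u1 t) (u2 t) (v1 t) (v2 t) = 1) ->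
  (forall t, u1 (t + 2 * PI / 3) = v1 t /\ u2 (t + 2 * PI / 3) = v2 t) ->
  (forall t, v1 (t + 2 * PI / 3) = - u1 t - v1 t /\
             v2 (t + 2 * PI / 3) = - u2 t - v2 t) ->
  is_C1 c1 -> is_C1 c2 ->
  let w11 := fun s => u1 s + c1 s in
  let w12 := fun s => u2 s + c2 s in
  let w21 := fun s => v1 s + c1 s in
  let w22 := fun s => v2 s + c2 s in
  let w31 := fun s => - u1 s - v1 s + c1 s in
  let w32 := fun s => - u2 s - v2 s + c2 s in
  (* horizontality *)
  (forall t, det2 (w21 t - w11 t) (w22 t - w12 t) (Derive w31 t) (Derive w32 t) = 0) ->
  (forall t, det2 (w31 t - w21 t) (w32 t - w22 t) (Derive w11 t) (Derive w12 t) = 0) ->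
  (forall t, det2 (w11 t - w31 t) (w12 t - w32 t) (Derive w21 t) (Derive w22 t) = 0) ->
  let p := fun s => det2 (u1 s) (u2 s) (Derive u1 s) (Derive u2 s) in
  let q := fun s => det2 (v1 s) (v2 s) (Derive v1 s) (Derive v2 s) in
  let r := fun s => det2 (Derive u1 s) (Derive u2 s) (v1 s) (v2 s) in
  let monodromy :=
    forall t,
      (w11 (t + 2 * PI / 3) = w21 t /\ w12 (t + 2 * PI / 3) = w22 t) /\
      (w21 (t + 2 * PI / 3) = w31 t /\ w22 (t + 2 * PI / 3) = w32 t) /\
      (w31 (t + 2 * PI / 3) = w11 t /\ w32 (t + 2 * PI / 3) = w12 t) in
  (* r = [u',v] = [v',u] *)
  (forall t, r t = det2 (Derive v1 t) (Derive v2 t) (u1 t) (u2 t)) /\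
  (forall t,
     Derive c1 t = 1 / 3 * (p t - 2 * q t + 2 * r t) * v1 t
                   - 1 / 3 * (q t - 2 * p t + 2 * r t) * u1 t /\
     Derive c2 t = 1 / 3 * (p t - 2 * q t + 2 * r t) * v2 t
                   - 1 / 3 * (q t - 2 * p t + 2 * r t) * u2 t) /\
  (monodromy <->
     RInt (fun t => (p t - 2 * q t + 2 * r t) * v1 t
                    - (q t - 2 * p t + 2 * r t) * u1 t) 0 (2 * PI) = 0 /\
     RInt (fun t => (p t - 2 * q t + 2 * r t) * v2 t
                    - (q t - 2 * p t + 2 * r t) * u2 t) 0 (2 * PI) = 0) /\
  (monodromy <->
     RInt (fun t => det2 (Derive u1 t) (Derive u2 t) (v1 t) (v2 t) * (v1 t - u1 t))
          0 (2 * PI) = 0 /\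
     RInt (fun t => det2 (Derive u1 t) (Derive u2 t) (v1 t) (v2 t) * (v2 t - u2 t))
          0 (2 * PI) = 0).
Proof.
  (* Two of the three horizontality conditions already determine c', and the 2 PI-periodicity
     of u, v follows from the 2 PI / 3 shift relations. *)
  intros su1 su2 sv1 sv2 _ _ hdet hu hv hc1 hc2 w11 w12 w21 w22 w31 w32
    _ hor1 hor2 p q r mono.
  set (T := 2 * PI / 3) in *.
  assert (velocity : forall t,
     Derive c1 t = 1 / 3 * (p t - 2 * q t + 2 * r t) * v1 t
                   - 1 / 3 * (q t - 2 * p t + 2 * r t) * u1 t /\
     Derive c2 t = 1 / 3 * (p t - 2 * q t + 2 * r t) * v2 t
                   - 1 / 3 * (q t - 2 * p t + 2 * r t) * u2 t).
  { intros t. destruct hc1 as [dc1 _], hc2 as [dc2 _].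
    specialize (hor1 t); specialize (hor2 t).
    unfold w11, w12, w21, w22, w31, w32 in hor1, hor2.
    rewrite !Derive_plus in hor1, hor2
      by first [apply smooth_ex_derive; assumption | apply dc1 | apply dc2].
    apply horizontal_velocity;
      [apply hdet | apply Derive_frame_det; assumption | rewrite <- hor1 | rewrite <- hor2];
      unfold det2; ring. }
  pose proof (wronskian_u_shift u1 u2 v1 v2 T su1 su2 hu) as p_shift.
  pose proof (wronskian_v_shift u1 u2 v1 v2 T su1 su2 sv1 sv2 hdet hv) as q_shift.
  pose proof (mixed_wronskian_shift u1 u2 v1 v2 T su1 su2 sv1 sv2 hdet hu hv) as r_shift.
  pose proof (continuous_wronskian u1 u2 su1 su2) as p_cont.
  pose proof (continuous_mixed_wronskian u1 u2 v1 v2 su1 su2 sv1 sv2) as r_cont.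
  split; [exact (mixed_wronskian_swap u1 u2 v1 v2 su1 su2 sv1 sv2 hdet) |].
  split; [exact velocity |].
  replace (2 * PI) with (3 * T) by (unfold T; field).
  rewrite (monodromy_iff_periodic u1 u2 v1 v2 c1 c2 T hu hv : mono <-> _).
  pose proof (periodic_iff_RInt_drift _ _ _ T p_shift q_shift r_shift) as drift_iff.
  pose proof (periodic_iff_RInt_mixed _ _ _ T p_shift q_shift r_shift p_cont r_cont)
    as mixed_iff.
  split; [rewrite (drift_iff u1 v1 c1), (drift_iff u2 v2 c2)
         | rewrite (mixed_iff u1 v1 c1), (mixed_iff u2 v2 c2)].
  all: try apply iff_refl.
  all: try (intros t; destruct (hu t), (hv t), (velocity t); assumption).
  all: try (apply smooth_continuous; assumption).
  all: assumption.
Qed.
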